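(* Let $\Omega$ be a countably infinite set and $G$ a subgroup of $S=\mathrm{Sym}(\Omega)$ not contained in $S^{\mathrm{finite}}$. Then for every subgroup $H\le S$, $H\preccurlyeq^{\mathrm{cj}}G$ if and only if $H\preccurlyeq G$. Moreover, if $G$ is uncountable, then for every subgroup $H\le S$, $H\approx^{\mathrm{cj}}G$ if and only if $H\approx G$.
   Context: $\mathrm{Sym}(\Omega)$ is the group of all permutations of $\Omega$; $S^{\mathrm{finite}}$ is the normal subgroup of permutations moving only finitely many points. For subgroups $G_1,G_2\le S$: $G_1\preccurlyeq G_2$ means there is a finite $U\subseteq S$ with $G_1\le\langle G_2\cup U\rangle$; $G_1\preccurlyeq^{\mathrm{cj}}G_2$ means there is a finite $U\subseteq S$ with $G_1\le\langle\bigcup_{f\in U}f^{-1}G_2f\rangle$; $\approx$ and $\approx^{\mathrm{cj}}$ denote the corresponding symmetric relations (each direction holding). *)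

From Stdlib Require Import List.
Import ListNotations.
Set Implicit Arguments.

Section SymDefs.
Variable T : Type.

Definition is_perm (f : T -> T) : Prop :=
  exists g : T -> T, (forall x, g (f x) = x) /\ (forall x, f (g x) = x).

Definition fset := (T -> T) -> Prop.

Definition subset (A B : fset) : Prop := forall f, A f -> B f.

Definition subgroup (K : fset) : Prop :=
  (forall f, K f -> is_perm f) /\
  K (fun x => x) /\
  (forall f g, K f -> K g -> K (fun x => f (g x))) /\
  (forall f g, K f -> (forall x, g (f x) = x) -> (forall x, f (g x) = x) -> K g).

Definition gen (A : fset) : fset :=
  fun f => forall K, subgroup K -> subset A K -> K f.

Definition finitary (f : T -> T) : Prop :=
  is_perm f /\ exists l : list T, forall x, f x <> x -> In x l.

Definition preceq (G1 G2 : fset) : Prop :=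
  exists U : list (T -> T), (forall u, In u U -> is_perm u) /\
    subset G1 (gen (fun h => G2 h \/ In h U)).

(* G1 ≼^cj G2 : exists finite U ⊆ S with G1 ≤ < ∪_{f∈U} f^{-1} G2 f >. *)
Definition preceq_cj (G1 G2 : fset) : Prop :=
  exists U : list (T -> T), (forall u, In u U -> is_perm u) /\
    subset G1 (gen (fun h => exists f finv g, In f U /\
        (forall x, finv (f x) = x) /\ (forall x, f (finv x) = x) /\
        G2 g /\ h = (fun x => finv (g (f x))))).

Definition approx (G1 G2 : fset) : Prop := preceq G1 G2 /\ preceq G2 G1.
Definition approx_cj (G1 G2 : fset) : Prop := preceq_cj G1 G2 /\ preceq_cj G2 G1.

Definition countable_set (A : fset) : Prop :=
  exists e : nat -> (T -> T), forall f, A f -> exists n, e n = f.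

Definition countably_infinite : Prop :=
  exists e : T -> nat, exists d : nat -> T,
    (forall x, d (e x) = x) /\ (forall n, e (d n) = n).

End SymDefs.

From Stdlib Require Import List Arith Lia Wf_nat Cantor.
From Stdlib Require Import Classical ClassicalEpsilon FunctionalExtensionality.
Import ListNotations.

(** If [g] moves infinitely many points of a countably infinite set [Omega], every permutation of
    [Omega] is a product of finitely many conjugates of [g] and [g^-1].  Indeed, every
    permutation is a product of two whose supports lie in infinite coinfinite sets; those are
    conjugate to permutations supported on one level [{a(0,m)}] of a grid [{a(n,m)}] that [g]
    moves off itself; and on the grid the commutator of [g] with a shift of the levels lets an
    infinite product of copies of such a permutation telescope to a single copy.  Hence the
    finitely many extra generators [U] of [H <= <G, U>] are products of finitely many conjugates
    of elements of [G], which gives [H <=cj G].  For the second part, [G <= <H, U>] with [H]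
    finitary would make [G] countable. *)

Definition inv_pair {X Y : Type} (f : X -> Y) (fi : Y -> X) : Prop :=
  (forall x, fi (f x) = x) /\ (forall y, f (fi y) = y).

Section InversePairs.
Context {X Y Z : Type}.

Lemma inv_pair_sym (f : X -> Y) fi : inv_pair f fi -> inv_pair fi f.
Proof. intros [H1 H2]; split; assumption. Qed.

Lemma inv_pair_id : inv_pair (fun x : X => x) (fun x => x).
Proof. split; reflexivity. Qed.

Lemma inv_pair_comp (f : Y -> Z) fi (h : X -> Y) hi :
  inv_pair f fi -> inv_pair h hi -> inv_pair (fun x => f (h x)) (fun x => hi (fi x)).
Proof.
  intros [f1 f2] [h1 h2]; split; intros x.
  - rewrite f1; apply h1.
  - rewrite h2; apply f2.
Qed.

Lemma inv_pair_inj (f : X -> Y) fi x y : inv_pair f fi -> f x = f y -> x = y.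
Proof. intros [f1 _] E. rewrite <- (f1 x), E. apply f1. Qed.

Lemma inv_pair_conj (e : X -> Y) (d : Y -> X) (h hi : X -> X) :
  inv_pair e d -> inv_pair h hi -> inv_pair (fun y => e (h (d y))) (fun y => e (hi (d y))).
Proof.
  intros [e1 e2] [h1 h2]; split; intros y; rewrite e1; [rewrite h1|rewrite h2]; apply e2.
Qed.

End InversePairs.

Section NormalClosure.
Context {X : Type}.

Inductive nclosure (g : X -> X) : (X -> X) -> Prop :=
| nclosure_conj f fi : inv_pair f fi -> nclosure g (fun x => fi (g (f x)))
| nclosure_inv h hi : nclosure g h -> inv_pair h hi -> nclosure g hi
| nclosure_comp h k : nclosure g h -> nclosure g k -> nclosure g (fun x => h (k x)).

Lemma nclosure_self g : nclosure g g.
Proof. exact (nclosure_conj g _ _ inv_pair_id). Qed.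

Lemma nclosure_self_inv g gi : inv_pair g gi -> nclosure g gi.
Proof. exact (nclosure_inv g g gi (nclosure_self g)). Qed.

Lemma nclosure_conjg g h c ci :
  nclosure g h -> inv_pair c ci -> nclosure g (fun x => ci (h (c x))).
Proof.
  intros Hh Hc. induction Hh as [f fi Hf|h hi _ IH Hh|h k _ IHh _ IHk].
  - exact (nclosure_conj g _ _ (inv_pair_comp _ _ _ _ Hf Hc)).
  - apply (nclosure_inv g _ _ IH).
    exact (inv_pair_comp _ _ _ _ (inv_pair_comp _ _ _ _ (inv_pair_sym _ _ Hc) Hh) Hc).
  - replace (fun x => ci (h (k (c x))))
      with (fun x => (fun y => ci (h (c y))) ((fun y => ci (k (c y))) x)).
    + exact (nclosure_comp g _ _ IHh IHk).
    + apply functional_extensionality; intros x. now rewrite (proj2 Hc).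
Qed.

End NormalClosure.

Lemma nclosure_transport {X Y : Type} (e : X -> Y) (d : Y -> X) (g h : X -> X) :
  inv_pair e d -> nclosure g h -> nclosure (fun y => e (g (d y))) (fun y => e (h (d y))).
Proof.
  intros Hed Hh. induction Hh as [f fi Hf|h hi _ IH Hh|h k _ IHh _ IHk].
  - replace (fun y => e (fi (g (f (d y)))))
      with (fun y => e (fi (d (e (g (d (e (f (d y)))))))))
      by (apply functional_extensionality; intros y; now rewrite !(proj1 Hed)).
    exact (nclosure_conj _ _ _ (inv_pair_conj e d f fi Hed Hf)).
  - exact (nclosure_inv _ _ _ IH (inv_pair_conj e d h hi Hed Hh)).
  - replace (fun y => e (h (k (d y)))) with (fun y => e (h (d (e (k (d y))))))
      by (apply functional_extensionality; intros y; now rewrite (proj1 Hed)).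
    exact (nclosure_comp _ _ _ IHh IHk).
Qed.

Section StrictlyIncreasing.
Variable f : nat -> nat.
Hypothesis f_lt_S : forall k, f k < f (S k).

Lemma incr_lt i j : i < j -> f i < f j.
Proof. induction 1 as [|j _ IH]; [apply f_lt_S|specialize (f_lt_S j); lia]. Qed.

Lemma incr_inj i j : f i = f j -> i = j.
Proof.
  intros E. destruct (lt_eq_lt_dec i j) as [[H|H]|H]; trivial;
    pose proof (incr_lt _ _ H); lia.
Qed.

Lemma incr_ge k : k <= f k.
Proof. induction k as [|k IH]; [lia|specialize (f_lt_S k); lia]. Qed.

Lemma block_apart (u v : nat -> nat) :
  (forall k, f k < u k <= f (S k)) -> (forall k, f k < v k <= f (S k)) ->
  (forall k, u k <> v k) -> forall i j, u i <> v j.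
Proof.
  intros Hu Hv Huv i j E. specialize (Hu i); specialize (Hv j).
  destruct (lt_eq_lt_dec i j) as [[H|H]|H].
  - pose proof (incr_lt _ _ H); destruct (Nat.eq_dec (S i) j) as [<-|];
      [lia|pose proof (incr_lt (S i) j ltac:(lia)); lia].
  - subst; exact (Huv j E).
  - pose proof (incr_lt _ _ H); destruct (Nat.eq_dec (S j) i) as [<-|];
      [lia|pose proof (incr_lt (S j) i ltac:(lia)); lia].
Qed.

End StrictlyIncreasing.

Definition infinite (A : nat -> Prop) : Prop := forall N, exists x, N <= x /\ A x.

Definition coinfinite (A : nat -> Prop) : Prop := infinite (fun x => ~ A x).

Definition supported_in (S : nat -> Prop) (s : nat -> nat) : Prop :=
  forall x, s x <> x -> S x.

Lemma supported_in_closed S s si x :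
  inv_pair s si -> supported_in S s -> S x -> S (s x).
Proof.
  intros Hs Hsupp Sx. apply NNPP; intros NS.
  assert (fixed : s (s x) = s x) by (apply NNPP; intros E; exact (NS (Hsupp _ E))).
  rewrite (inv_pair_inj s si _ _ Hs fixed) in NS. exact (NS Sx).
Qed.

Lemma supported_in_inv S s si : inv_pair s si -> supported_in S s -> supported_in S si.
Proof.
  intros Hs Hsupp x E. apply NNPP; intros NS. apply E.
  assert (fixed : s x = x) by (apply NNPP; intros E'; exact (NS (Hsupp _ E'))).
  rewrite <- fixed at 1. apply Hs.
Qed.

Section Enumeration.
Variable A : nat -> Prop.
Hypothesis A_inf : infinite A.

Definition least_from (n : nat) : nat :=
  epsilon (inhabits 0) (fun x => n <= x /\ A x /\ forall y, n <= y -> A y -> x <= y).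

Lemma least_from_spec n :
  n <= least_from n /\ A (least_from n) /\ forall y, n <= y -> A y -> least_from n <= y.
Proof.
  unfold least_from; apply epsilon_spec.
  destruct (dec_inh_nat_subset_has_unique_least_element (fun x => n <= x /\ A x))
    as [x [[[Hn Ax] Hmin] _]].
  - intros; apply classic.
  - destruct (A_inf n) as [x Hx]; eauto.
  - exists x; auto.
Qed.

Fixpoint enum (k : nat) : nat :=
  least_from (match k with 0 => 0 | S k => S (enum k) end).

Lemma enum_in k : A (enum k).
Proof. destruct k; apply least_from_spec. Qed.

Lemma enum_lt_S k : enum k < enum (S k).
Proof. simpl enum at 2. destruct (least_from_spec (S (enum k))); lia. Qed.

Lemma enum_surj y : A y -> exists k, enum k = y.
Proof.
  intros Ay.
  destruct (dec_inh_nat_subset_has_unique_least_element (fun k => y <= enum k))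
    as [k [[Hk Hmin] _]].
  - intros; apply classic.
  - exists y; apply (incr_ge _ enum_lt_S).
  - exists k. apply Nat.le_antisymm; trivial. destruct k as [|k].
    + apply least_from_spec; [lia|exact Ay].
    + apply least_from_spec; [|exact Ay].
      change (S (enum k) <= y).
      destruct (le_lt_dec y (enum k)) as [H|H]; [specialize (Hmin k H); lia|lia].
Qed.

Definition enum_index (y : nat) : nat := epsilon (inhabits 0) (fun k => enum k = y).

Lemma enum_index_spec y : A y -> enum (enum_index y) = y.
Proof. intros Ay. unfold enum_index; apply epsilon_spec, enum_surj, Ay. Qed.

Lemma enum_index_enum k : enum_index (enum k) = k.
Proof. apply (incr_inj _ enum_lt_S), enum_index_spec, enum_in. Qed.

End Enumeration.

(** Off [A], the permutation matches the complements of [A] and [B] by enumerating both. *)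
Lemma extend_bijection (A B : nat -> Prop) phi psi :
  coinfinite A -> coinfinite B ->
  (forall x, A x -> B (phi x)) -> (forall y, B y -> A (psi y)) ->
  (forall x, A x -> psi (phi x) = x) -> (forall y, B y -> phi (psi y) = y) ->
  exists f fi, inv_pair f fi /\ forall x, A x -> f x = phi x.
Proof.
  intros CA CB AB BA psiphi phipsi.
  set (NA := fun x => ~ A x) in *; set (NB := fun x => ~ B x) in *.
  exists (fun x => if excluded_middle_informative (A x) then phi x
           else enum NB (enum_index NA x)).
  exists (fun y => if excluded_middle_informative (B y) then psi y
           else enum NA (enum_index NB y)).
  split; [split|].
  - intros x. destruct (excluded_middle_informative (A x)) as [Ax|NAx].
    + destruct (excluded_middle_informative (B (phi x))) as [_|NBx]; auto.
      now destruct (NBx (AB x Ax)).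
    + destruct (excluded_middle_informative (B _)) as [Bx|_].
      * now destruct (enum_in NB CB _ Bx).
      * now rewrite enum_index_enum, enum_index_spec.
  - intros y. destruct (excluded_middle_informative (B y)) as [By|NBy].
    + destruct (excluded_middle_informative (A (psi y))) as [_|NAy]; auto.
      now destruct (NAy (BA y By)).
    + destruct (excluded_middle_informative (A _)) as [Ay|_].
      * now destruct (enum_in NA CA _ Ay).
      * now rewrite enum_index_enum, enum_index_spec.
  - intros x Ax. now destruct (excluded_middle_informative (A x)).
Qed.

Definition supported_ic (s : nat -> nat) : Prop :=
  exists S, infinite S /\ coinfinite S /\ supported_in S s.

Lemma range_inf_coinf (u v : nat -> nat) :
  (forall k, k <= u k) -> (forall k, k <= v k) -> (forall i j, u i <> v j) ->
  infinite (fun x => exists k, x = u k) /\ coinfinite (fun x => exists k, x = u k).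
Proof.
  intros Hu Hv Huv; split; intros N.
  - exists (u N); eauto.
  - exists (v N); split; [auto|]. intros [k E]. exact (Huv k N (eq_sym E)).
Qed.

Lemma compl_inf_coinf S : infinite S -> coinfinite S ->
  infinite (fun x => ~ S x) /\ coinfinite (fun x => ~ S x).
Proof.
  intros IS CS; split; [exact CS|]. intros N.
  destruct (IS N) as [x [Nx Sx]]. exists x; auto.
Qed.

Lemma nclosure_transfer_support g (D S : nat -> Prop) :
  infinite D -> coinfinite D -> infinite S -> coinfinite S ->
  (forall t, is_perm t -> supported_in D t -> nclosure g t) ->
  forall s, is_perm s -> supported_in S s -> nclosure g s.
Proof.
  intros ID CD IS CS HD s [si Hs] Ss.
  destruct (extend_bijection S D (fun x => enum D (enum_index S x))
              (fun y => enum S (enum_index D y)) CS CD) as [f [fi [Hf Sf]]].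
  1, 2: intros; apply enum_in; assumption.
  1: intros x Sx; rewrite (enum_index_enum D ID); exact (enum_index_spec S IS x Sx).
  1: intros y Dy; rewrite (enum_index_enum S IS); exact (enum_index_spec D ID y Dy).
  set (t := fun y => f (s (fi y))).
  assert (Dt : supported_in D t).
  { intros y Ey.
    assert (Sfy : S (fi y)).
    { apply Ss; intros E. apply Ey. unfold t. rewrite E. apply Hf. }
    rewrite <- (proj2 Hf y), (Sf _ Sfy). apply enum_in; assumption. }
  assert (Ht : nclosure g t).
  { apply HD; [|exact Dt]. exists (fun y => f (si (fi y))).
    exact (inv_pair_comp _ _ _ _ Hf (inv_pair_comp _ _ _ _ Hs (inv_pair_sym _ _ Hf))). }
  replace s with (fun x => fi (t (f x))).
  - exact (nclosure_conjg g t f fi Ht Hf).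
  - apply functional_extensionality; intros x. unfold t. now rewrite !(proj1 Hf).
Qed.

(** [al] is [p] on [X] and the identity on [Y]; [be] is then the identity on [X]. *)
Lemma perm_split p pi (X Y : nat -> Prop) :
  inv_pair p pi ->
  (forall x, X x -> ~ Y x) -> (forall x, X x -> ~ Y (p x)) ->
  coinfinite (fun x => X x \/ Y x) -> coinfinite (fun y => X (pi y) \/ Y y) ->
  exists al be, (forall x, p x = al (be x)) /\ is_perm al /\ is_perm be /\
    supported_in (fun x => ~ Y x) al /\ supported_in (fun x => ~ X x) be.
Proof.
  intros [p1 p2] XY XpY CA CB.
  destruct (extend_bijection _ _
              (fun x => if excluded_middle_informative (X x) then p x else x)
              (fun y => if excluded_middle_informative (X (pi y)) then pi y else y) CA CB)
    as [f [fi [Hf Af]]].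
  - intros x Ax; destruct (excluded_middle_informative (X x)) as [Xx|NXx].
    + left; now rewrite p1.
    + destruct Ax; tauto.
  - intros y By; destruct (excluded_middle_informative (X (pi y))) as [Xy|NXy]; tauto.
  - intros x Ax; destruct (excluded_middle_informative (X x)) as [Xx|NXx].
    + rewrite p1. now destruct (excluded_middle_informative (X x)).
    + destruct (excluded_middle_informative (X (pi x))) as [Xpx|]; [|reflexivity].
      destruct Ax as [|Yx]; [tauto|]. destruct (XpY _ Xpx). now rewrite p2.
  - intros y By; destruct (excluded_middle_informative (X (pi y))) as [Xy|NXy].
    + rewrite p2. now destruct (excluded_middle_informative (X (pi y))).
    + destruct (excluded_middle_informative (X y)) as [Xy|]; [|reflexivity].
      destruct By as [|Yy]; [tauto|]. now destruct (XY _ Xy).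
  - exists f, (fun x => fi (p x)). split; [|split; [|split; [|split]]].
    + intros x. now rewrite (proj2 Hf).
    + exists fi; exact Hf.
    + exists (fun x => pi (f x)). split; intros x; [rewrite (proj2 Hf)|rewrite p2]; auto.
      apply Hf.
    + intros x E Yx. apply E. rewrite Af by auto.
      destruct (excluded_middle_informative (X x)) as [Xx|]; [now destruct (XY _ Xx)|auto].
    + intros x E Xx. apply E.
      assert (fx : f x = p x)
        by (rewrite Af by auto; now destruct (excluded_middle_informative (X x))).
      rewrite <- fx. apply Hf.
Qed.

Lemma in_le_list_max a l : In a l -> a <= list_max l.
Proof. intros H. exact (proj1 (Forall_forall _ l) (proj1 (list_max_le l _) (le_n _)) a H). Qed.

Definition low_points (pi : nat -> nat) (M : nat) : list nat :=
  seq 0 (S M) ++ map pi (seq 0 (S M)).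

Lemma escapes_above p pi M x :
  inv_pair p pi -> ~ In x (low_points pi M) -> M < x /\ M < p x.
Proof.
  intros [p1 _] Hx. split; apply Nat.nle_gt; intros Hle; apply Hx, in_or_app.
  - left; apply in_seq; lia.
  - right. rewrite <- (p1 x). apply in_map, in_seq; lia.
Qed.

Lemma perm_apart_sequences p pi : inv_pair p pi ->
  exists xs ys zs : nat -> nat,
    (forall k, k <= xs k /\ k <= ys k /\ k <= zs k) /\
    (forall i j, xs i <> ys j /\ p (xs i) <> ys j /\
                 xs i <> zs j /\ ys i <> zs j /\ p (xs i) <> zs j).
Proof.
  intros Hp.
  set (esc := fun M => S (list_max (low_points pi M))).
  assert (esc_spec : forall M, M < esc M /\ M < p (esc M)).
  { intros M. apply (escapes_above p pi M _ Hp). intros H.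
    apply in_le_list_max in H. unfold esc in H; lia. }
  set (bound := fun k => Nat.iter k (fun M => S (S (Nat.max (esc M) (p (esc M))))) 0).
  set (xs := fun k => esc (bound k)).
  set (ys := fun k => S (Nat.max (xs k) (p (xs k)))).
  assert (bound_S : forall k, bound (S k) = S (ys k)) by reflexivity.
  assert (in_block : forall k, bound k < xs k < ys k /\ bound k < p (xs k) < ys k)
    by (intros k; destruct (esc_spec (bound k)); unfold ys, xs; lia).
  assert (bound_lt : forall k, bound k < bound (S k))
    by (intros k; rewrite bound_S; specialize (in_block k); lia).
  exists xs, ys, (fun k => bound (S k)). split.
  - intros k. pose proof (incr_ge bound bound_lt k). pose proof (incr_ge bound bound_lt (S k)).
    specialize (in_block k). lia.
  - intros i j. pose proof (block_apart bound bound_lt) as apart.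
    repeat split; [apply (apart xs ys)|apply (apart (fun k => p (xs k)) ys)
                  |apply (apart xs (fun k => bound (S k)))|apply (apart ys (fun k => bound (S k)))
                  |apply (apart (fun k => p (xs k)) (fun k => bound (S k)))].
    all: intros k; rewrite ?bound_S; specialize (in_block k); lia.
Qed.

Lemma perm_split_supported_ic p : is_perm p ->
  exists al be, (forall x, p x = al (be x)) /\ is_perm al /\ is_perm be /\
    supported_ic al /\ supported_ic be.
Proof.
  intros [pi Hp].
  destruct (perm_apart_sequences p pi Hp) as (xs & ys & zs & ge & apart).
  destruct (perm_split p pi (fun x => exists k, x = xs k) (fun x => exists k, x = ys k) Hp)
    as (al & be & Epab & Pal & Pbe & Sal & Sbe).
  - intros x [i ->] [j Eij]. exact (proj1 (apart i j) Eij).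
  - intros x [i ->] [j Eij]. exact (proj1 (proj2 (apart i j)) Eij).
  - intros N. exists (zs N). split; [apply ge|].
    intros [[i E]|[i E]]; symmetry in E; revert E; apply (apart i N).
  - intros N. exists (zs N). split; [apply ge|].
    intros [[i E]|[i E]]; [|symmetry in E; revert E; apply (apart i N)].
    apply (apart i N). rewrite <- E. apply Hp.
  - exists al, be. repeat split; auto.
    + destruct (range_inf_coinf ys xs) as [I C].
      1, 2: intros k; apply ge.
      { intros i j E. exact (proj1 (apart j i) (eq_sym E)). }
      destruct (compl_inf_coinf _ I C). eexists; eauto.
    + destruct (range_inf_coinf xs ys) as [I C].
      1, 2: intros k; apply ge.
      { intros i j. apply apart. }
      destruct (compl_inf_coinf _ I C). eexists; eauto.
Qed.

(** The successor map of [Z] transported along [2k |-> k], [2k+1 |-> -(k+1)]: the even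
    numbers are the nonnegative integers. *)
Definition zigzag (n : nat) : nat :=
  if Nat.even n then S (S n) else match n with 1 => 0 | _ => n - 2 end.

Definition zigzag_inv (n : nat) : nat :=
  if Nat.even n then match n with 0 => 1 | _ => n - 2 end else S (S n).

Lemma zigzag_inv_pair : inv_pair zigzag zigzag_inv.
Proof.
  split; intros [|[|m]]; try reflexivity; unfold zigzag, zigzag_inv; simpl Nat.even;
    destruct (Nat.even m) eqn:E; simpl Nat.even; rewrite ?E; simpl; rewrite ?Nat.sub_0_r, ?E;
    reflexivity.
Qed.

Lemma even_zigzag_inv n : n <> 0 -> Nat.even (zigzag_inv n) = Nat.even n.
Proof.
  intros Hn. destruct n as [|[|m]]; [lia|reflexivity|]. unfold zigzag_inv; simpl Nat.even.
  destruct (Nat.even m) eqn:E; simpl; rewrite ?Nat.sub_0_r; auto.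
Qed.

Section Swindle.
Variables g gi a : nat -> nat.
Hypothesis Hg : inv_pair g gi.
Hypothesis a_lt_S : forall k, a k < a (S k).
Hypothesis a_apart : forall i j, g (a i) <> a j.

Definition grid (q : nat * nat) : nat := a (to_nat q).

Definition on_grid (y : nat) : Prop := exists q, y = grid q.

Definition grid_coord (y : nat) : nat * nat := epsilon (inhabits (0, 0)) (fun q => y = grid q).

Lemma grid_inj q q' : grid q = grid q' -> q = q'.
Proof. intros E. exact (to_nat_inj _ _ (incr_inj a a_lt_S _ _ E)). Qed.

Lemma grid_coord_grid q : grid_coord (grid q) = q.
Proof.
  apply grid_inj. symmetry. unfold grid_coord. apply epsilon_spec. now exists q.
Qed.

Definition grid_lift (F : nat * nat -> nat * nat) (y : nat) : nat :=
  if excluded_middle_informative (on_grid y) then grid (F (grid_coord y)) else y.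

Lemma grid_lift_grid F q : grid_lift F (grid q) = grid (F q).
Proof.
  unfold grid_lift. destruct (excluded_middle_informative _) as [_|N].
  - now rewrite grid_coord_grid.
  - destruct N. now exists q.
Qed.

Lemma grid_lift_off F y : ~ on_grid y -> grid_lift F y = y.
Proof. unfold grid_lift. now destruct (excluded_middle_informative _). Qed.

Lemma grid_lift_inv_pair F Fi : inv_pair F Fi -> inv_pair (grid_lift F) (grid_lift Fi).
Proof.
  intros [F1 F2]; split; intros y;
    destruct (classic (on_grid y)) as [[q ->]|N].
  all: try (rewrite !grid_lift_grid; f_equal; auto).
  all: rewrite (grid_lift_off _ y N), grid_lift_off; auto.
Qed.

Definition shift : nat -> nat := grid_lift (fun q => (zigzag (fst q), snd q)).
Definition shift_inv : nat -> nat := grid_lift (fun q => (zigzag_inv (fst q), snd q)).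

Lemma shift_inv_pair : inv_pair shift shift_inv.
Proof.
  apply grid_lift_inv_pair. destruct zigzag_inv_pair as [z1 z2].
  split; intros [n m]; simpl; [rewrite z1|rewrite z2]; reflexivity.
Qed.

(** Since [g] moves the grid off itself, the commutator [shift g shift^-1 g^-1] acts on the
    grid as [shift]. *)
Definition shift_comm (y : nat) : nat := shift (g (shift_inv (gi y))).
Definition shift_comm_inv (y : nat) : nat := g (shift (gi (shift_inv y))).

Lemma shift_comm_inv_pair : inv_pair shift_comm shift_comm_inv.
Proof.
  exact (inv_pair_comp _ _ _ _ (inv_pair_comp _ _ _ _ shift_inv_pair
           (inv_pair_comp _ _ _ _ Hg (inv_pair_sym _ _ shift_inv_pair))) (inv_pair_sym _ _ Hg)).
Qed.

Lemma shift_comm_in_nclosure : nclosure g shift_comm.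
Proof.
  exact (nclosure_comp g _ _ (nclosure_conj g _ _ (inv_pair_sym _ _ shift_inv_pair))
           (nclosure_self_inv g gi Hg)).
Qed.

Lemma shift_comm_grid n m : shift_comm (grid (n, m)) = grid (zigzag n, m).
Proof.
  unfold shift_comm, shift, shift_inv. rewrite (grid_lift_off _ (gi _)).
  - rewrite (proj2 Hg). apply grid_lift_grid.
  - intros [q E]. apply (a_apart (to_nat q) (to_nat (n, m))).
    unfold grid in E. rewrite <- E. apply Hg.
Qed.

Lemma shift_comm_inv_grid n m : shift_comm_inv (grid (n, m)) = grid (zigzag_inv n, m).
Proof.
  rewrite <- (proj2 zigzag_inv_pair n) at 1. rewrite <- shift_comm_grid.
  apply shift_comm_inv_pair.
Qed.

Lemma shift_comm_inv_off y : ~ on_grid y -> ~ on_grid (shift_comm_inv y).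
Proof.
  intros N [[n m] E]. apply N. exists (zigzag n, m).
  rewrite <- shift_comm_grid, <- E. symmetry. apply shift_comm_inv_pair.
Qed.

Definition on_level0 (rho : nat -> nat) (q : nat * nat) : nat * nat :=
  if fst q =? 0 then (0, rho (snd q)) else q.

(** The Hilbert-hotel swindle: [P := grid_lift (evens rho)] acts by [rho] on every even
    level, i.e. on the levels at nonnegative positions of the [zigzag] orbit, so
    [P shift_comm P^-1 shift_comm^-1] acts by [rho] on level [0] alone. *)
Lemma level0_perm_in_nclosure rho rhoi :
  inv_pair rho rhoi -> nclosure g (grid_lift (on_level0 rho)).
Proof.
  intros [r1 r2].
  set (evens := fun (r : nat -> nat) (q : nat * nat) =>
               if Nat.even (fst q) then (fst q, r (snd q)) else q).
  assert (HP : inv_pair (grid_lift (evens rhoi)) (grid_lift (evens rho))).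
  { apply grid_lift_inv_pair. split; intros [n m]; unfold evens; simpl;
      destruct (Nat.even n) eqn:E; simpl; rewrite ?E, ?r1, ?r2; reflexivity. }
  replace (grid_lift (on_level0 rho))
    with (fun y => (fun x => grid_lift (evens rho) (shift_comm (grid_lift (evens rhoi) x)))
                     (shift_comm_inv y)).
  - exact (nclosure_comp g _ _ (nclosure_conjg g _ _ _ shift_comm_in_nclosure HP)
             (nclosure_inv g _ _ shift_comm_in_nclosure shift_comm_inv_pair)).
  - apply functional_extensionality; intros y.
    destruct (classic (on_grid y)) as [[[n m] ->]|N].
    + rewrite shift_comm_inv_grid, !grid_lift_grid. unfold evens, on_level0; simpl.
      destruct (Nat.eqb_spec n 0) as [->|nz].
      { simpl. now rewrite shift_comm_grid, grid_lift_grid. }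
      rewrite (even_zigzag_inv n nz).
      destruct (Nat.even n) eqn:E;
        rewrite shift_comm_grid, (proj2 zigzag_inv_pair), grid_lift_grid; simpl;
        rewrite ?E, ?r2; reflexivity.
    + rewrite (grid_lift_off _ (shift_comm_inv y)) by now apply shift_comm_inv_off.
      rewrite (proj2 shift_comm_inv_pair), !grid_lift_off; auto.
Qed.

Definition level0 (y : nat) : Prop := exists m, y = grid (0, m).

Lemma level0_inf_coinf : infinite level0 /\ coinfinite level0.
Proof.
  assert (grid_ge : forall n m, m <= grid (n, m)).
  { intros n m. pose proof (to_nat_non_decreasing n m).
    pose proof (incr_ge a a_lt_S (to_nat (n, m))). unfold grid; lia. }
  apply (range_inf_coinf (fun m => grid (0, m)) (fun m => grid (1, m))); auto.
  intros i j E. discriminate (grid_inj _ _ E).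
Qed.

Lemma level0_supported_in_nclosure t : is_perm t -> supported_in level0 t -> nclosure g t.
Proof.
  intros [ti Ht] St.
  assert (level0_stable : forall s si, inv_pair s si -> supported_in level0 s ->
            forall m, s (grid (0, m)) = grid (0, snd (grid_coord (s (grid (0, m)))))).
  { intros s si Hs Ss m.
    destruct (supported_in_closed _ _ _ (grid (0, m)) Hs Ss) as [m' ->]; [now exists m|].
    now rewrite grid_coord_grid. }
  set (rho := fun m => snd (grid_coord (t (grid (0, m))))).
  set (rhoi := fun m => snd (grid_coord (ti (grid (0, m))))).
  assert (t_level0 : forall m, t (grid (0, m)) = grid (0, rho m))
    by exact (level0_stable t ti Ht St).
  assert (ti_level0 : forall m, ti (grid (0, m)) = grid (0, rhoi m))
    by exact (level0_stable ti t (inv_pair_sym _ _ Ht) (supported_in_inv _ _ _ Ht St)).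
  assert (Hrho : inv_pair rho rhoi).
  { split; intros m; refine (f_equal snd (grid_inj (0, _) (0, m) _)).
    - change (grid (0, rhoi (rho m)) = grid (0, m)). rewrite <- ti_level0, <- t_level0. apply Ht.
    - change (grid (0, rho (rhoi m)) = grid (0, m)). rewrite <- t_level0, <- ti_level0. apply Ht. }
  replace t with (grid_lift (on_level0 rho)); [exact (level0_perm_in_nclosure _ _ Hrho)|].
  apply functional_extensionality; intros y.
  destruct (classic (on_grid y)) as [[[n m] ->]|N].
  - rewrite grid_lift_grid. unfold on_level0; simpl.
    destruct (Nat.eqb_spec n 0) as [->|nz]; [now rewrite t_level0|].
    symmetry. apply NNPP; intros E. destruct (St _ E) as [m' E'].
    apply nz. exact (f_equal fst (grid_inj _ _ E')).
  - rewrite grid_lift_off by auto. symmetry. apply NNPP; intros E.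
    apply N. destruct (St _ E) as [m' ->]. now exists (0, m').
Qed.

End Swindle.

Lemma nonfinitary_apart_seq g : is_perm g -> ~ finitary g ->
  exists a, (forall k, a k < a (S k)) /\ forall i j, g (a i) <> a j.
Proof.
  intros Pg NFg. pose proof Pg as [gi Hg].
  assert (moved_above : forall M, exists x, g x <> x /\ M < x /\ M < g x).
  { intros M. apply NNPP; intros N. apply NFg. split; [exact Pg|].
    exists (low_points gi M). intros x Ex. apply NNPP; intros Lx.
    apply N. exists x. split; [exact Ex|]. exact (escapes_above g gi M x Hg Lx). }
  set (c := fun M => epsilon (inhabits 0) (fun x => g x <> x /\ M < x /\ M < g x)).
  assert (c_spec : forall M, g (c M) <> c M /\ M < c M /\ M < g (c M))
    by (intros M; apply epsilon_spec, moved_above).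
  set (bound := fun k => Nat.iter k (fun M => Nat.max (c M) (g (c M))) 0).
  assert (in_block : forall k, bound k < c (bound k) <= bound (S k) /\
                               bound k < g (c (bound k)) <= bound (S k))
    by (intros k; specialize (c_spec (bound k)); simpl; lia).
  assert (bound_lt : forall k, bound k < bound (S k))
    by (intros k; specialize (in_block k); lia).
  exists (fun k => c (bound k)). split.
  - intros k. pose proof (in_block k). pose proof (in_block (S k)). lia.
  - apply (block_apart bound bound_lt (fun k => g (c (bound k))) (fun k => c (bound k))).
    + intros k. apply in_block.
    + intros k. apply in_block.
    + intros k. apply c_spec.
Qed.

Theorem nclosure_nonfinitary_nat g :
  is_perm g -> ~ finitary g -> forall u : nat -> nat, is_perm u -> nclosure g u.
Proof.
  intros Pg NFg u Pu.
  destruct (nonfinitary_apart_seq g Pg NFg) as [a [a_lt_S a_apart]].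
  destruct Pg as [gi Hg].
  destruct (level0_inf_coinf a a_lt_S) as [ID CD].
  pose proof (level0_supported_in_nclosure g gi a Hg a_lt_S a_apart) as HD.
  destruct (perm_split_supported_ic u Pu)
    as (al & be & E & Pal & Pbe & (S1 & I1 & C1 & H1) & (S2 & I2 & C2 & H2)).
  replace u with (fun x => al (be x)) by (apply functional_extensionality; auto).
  apply nclosure_comp; [apply (nclosure_transfer_support g _ S1 ID CD)
                       |apply (nclosure_transfer_support g _ S2 ID CD)]; assumption.
Qed.

Theorem nclosure_nonfinitary (T : Type) (g : T -> T) : countably_infinite T ->
  is_perm g -> ~ finitary g -> forall u : T -> T, is_perm u -> nclosure g u.
Proof.
  intros (e & d & Hed) [gi Hg] NFg u [ui Hu].
  assert (Hde : inv_pair d e) by (apply inv_pair_sym; exact Hed).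
  assert (NFg' : ~ finitary (fun n => e (g (d n)))).
  { intros [_ [l Hl]]. apply NFg. split; [now exists gi|].
    exists (map d l). intros x Ex. rewrite <- (proj1 Hed x). apply in_map, Hl.
    rewrite (proj1 Hed). intros E. apply Ex. rewrite <- (proj1 Hed (g x)), E. apply Hed. }
  pose proof (nclosure_nonfinitary_nat _ (ex_intro _ _ (inv_pair_conj e d g gi Hed Hg)) NFg' _
                (ex_intro _ _ (inv_pair_conj e d u ui Hed Hu))) as Hnat.
  pose proof (nclosure_transport d e _ _ Hde Hnat) as HT.
  assert (back : forall f : T -> T, (fun y => d (e (f (d (e y))))) = f)
    by (intros f; apply functional_extensionality; intros y; now rewrite !(proj1 Hed)).
  cbv beta in HT. rewrite !back in HT. exact HT.
Qed.

Section Generation.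
Variable T : Type.

Definition perm_list (U : list (T -> T)) : Prop := forall u, In u U -> is_perm u.

Lemma is_perm_subgroup : subgroup (@is_perm T).
Proof.
  split; [|split; [|split]].
  - auto.
  - exists (fun x => x); exact inv_pair_id.
  - intros f h [fi Hf] [hi Hh]. exists (fun x => hi (fi x)). exact (inv_pair_comp _ _ _ _ Hf Hh).
  - intros f fi _ f1 f2. now exists f.
Qed.

Lemma gen_incl (A : fset T) : subset A (gen A).
Proof. intros f Af K _ AK. exact (AK f Af). Qed.

Lemma gen_subgroup (A : fset T) : (forall f, A f -> is_perm f) -> subgroup (gen A).
Proof.
  intros HA. split; [|split; [|split]].
  - intros f Hf. exact (Hf _ is_perm_subgroup HA).
  - intros K HK _. apply HK.
  - intros f h Hf Hh K HK AK. apply HK; [apply Hf|apply Hh]; assumption.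
  - intros f fi Hf f1 f2 K HK AK. exact (proj2 (proj2 (proj2 HK)) f fi (Hf K HK AK) f1 f2).
Qed.

Lemma gen_mono (A B : fset T) : subset A B -> subset (gen A) (gen B).
Proof. intros AB f Hf K HK BK. apply Hf; [exact HK|]. intros h Ah. exact (BK h (AB h Ah)). Qed.

Definition conjset (G : fset T) (U : list (T -> T)) : fset T :=
  fun h => exists f finv g, In f U /\
    (forall x, finv (f x) = x) /\ (forall x, f (finv x) = x) /\
    G g /\ h = (fun x => finv (g (f x))).

Lemma conjset_perm G U : subgroup G -> forall h, conjset G U h -> is_perm h.
Proof.
  intros HG h (f & fi & g & _ & f1 & f2 & Gg & ->).
  destruct (proj1 HG g Gg) as [gi Hg].
  exists (fun x => fi (gi (f x))).
  exact (inv_pair_comp _ _ _ _ (conj f2 f1) (inv_pair_comp _ _ _ _ Hg (conj f1 f2))).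
Qed.

Lemma conjset_mono G U1 U2 : incl U1 U2 -> subset (conjset G U1) (conjset G U2).
Proof. intros HU h (f & fi & g & Uf & Hh). exists f, fi, g. split; auto. Qed.

Lemma preceq_cj_preceq (H G : fset T) : subgroup G -> preceq_cj H G -> preceq H G.
Proof.
  intros HG [U [HU HS]]. exists U. split; [exact HU|].
  intros h Hh. apply HS in Hh. apply Hh.
  - apply gen_subgroup. intros f [Gf|Uf]; [exact (proj1 HG f Gf)|exact (HU f Uf)].
  - intros k (f & fi & g & Uf & f1 & f2 & Gg & ->).
    destruct (gen_subgroup (fun h => G h \/ In h U)) as (_ & _ & Hcomp & Hinv).
    { intros f' [Gf'|Uf']; [exact (proj1 HG f' Gf')|exact (HU f' Uf')]. }
    assert (Hf : gen (fun h => G h \/ In h U) f) by (apply gen_incl; now right).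
    apply Hcomp; [exact (Hinv f fi Hf f1 f2)|].
    apply Hcomp; [|exact Hf]. apply gen_incl. now left.
Qed.

Lemma nclosure_in_conj_gen G g : subgroup G -> G g ->
  forall h, nclosure g h -> exists U, perm_list U /\ gen (conjset G U) h.
Proof.
  intros HG Gg h Hh.
  induction Hh as [f fi Hf|h hi _ [U [HU Hh]] Hhi|h k _ [U1 [HU1 Hh]] _ [U2 [HU2 Hk]]].
  - exists [f]. split.
    + intros u [<-|[]]. now exists fi.
    + apply gen_incl. exists f, fi, g. split; [now left|]. destruct Hf. auto.
  - exists U. split; [exact HU|].
    exact (proj2 (proj2 (proj2 (gen_subgroup _ (conjset_perm G U HG)))) h hi Hh
             (proj1 Hhi) (proj2 Hhi)).
  - exists (U1 ++ U2). split.
    + intros u Hu. apply in_app_or in Hu. destruct Hu; auto.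
    + apply (gen_subgroup _ (conjset_perm G _ HG)).
      * revert Hh. apply gen_mono, conjset_mono, incl_appl, incl_refl.
      * revert Hk. apply gen_mono, conjset_mono, incl_appr, incl_refl.
Qed.

Lemma conj_gen_list G (V : list (T -> T)) :
  (forall v, In v V -> exists U, perm_list U /\ gen (conjset G U) v) ->
  exists U, perm_list U /\ forall v, In v V -> gen (conjset G U) v.
Proof.
  induction V as [|v V IH]; intros HV.
  - exists []. split; intros u [].
  - destruct (HV v (or_introl eq_refl)) as [Uv [HUv Hv]].
    destruct IH as [U [HU HVU]]; [intros w Hw; apply HV; now right|].
    exists (Uv ++ U). split.
    + intros u Hu. apply in_app_or in Hu. destruct Hu; auto.
    + intros w [<-|Hw].
      * revert Hv. apply gen_mono, conjset_mono, incl_appl, incl_refl.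
      * generalize (HVU w Hw). apply gen_mono, conjset_mono, incl_appr, incl_refl.
Qed.

Lemma preceq_preceq_cj (H G : fset T) : countably_infinite T -> subgroup G ->
  ~ subset G (@finitary T) -> preceq H G -> preceq_cj H G.
Proof.
  intros hT HG NF [U0 [HU0 HS]].
  destruct (not_all_ex_not _ _ NF) as [g Hg].
  destruct (imply_to_and _ _ Hg) as [Gg NFg].
  destruct (conj_gen_list G U0) as [U [HU HU0U]].
  { intros u Uu. apply (nclosure_in_conj_gen G g HG Gg).
    exact (nclosure_nonfinitary T g hT (proj1 HG g Gg) NFg u (HU0 u Uu)). }
  exists ((fun x => x) :: U). split.
  - intros u [<-|Uu]; [exists (fun x => x); exact inv_pair_id|exact (HU u Uu)].
  - intros h Hh. apply (HS h Hh); [exact (gen_subgroup _ (conjset_perm G _ HG))|].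
    intros k [Gk|Uk].
    + apply gen_incl. exists (fun x => x), (fun x => x), k. repeat split; auto. now left.
    + generalize (HU0U k Uk). apply gen_mono, conjset_mono. intros u Hu; now right.
Qed.

End Generation.

Fixpoint decode_list (k n : nat) : list nat :=
  match k with
  | 0 => []
  | S k => fst (of_nat n) :: decode_list k (snd (of_nat n))
  end.

Definition list_of_nat (n : nat) : list nat := decode_list (fst (of_nat n)) (snd (of_nat n)).

Lemma list_of_nat_surj l : exists n, list_of_nat n = l.
Proof.
  assert (H : exists c, decode_list (length l) c = l).
  { induction l as [|x l [c IH]]; [now exists 0|].
    exists (to_nat (x, c)). cbn [length decode_list]. rewrite cancel_of_to; simpl; now rewrite IH. }
  destruct H as [c H]. exists (to_nat (length l, c)). unfold list_of_nat.
  now rewrite cancel_of_to.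
Qed.

Section Countability.
Variable T : Type.

Lemma countable_subset (A B : fset T) : subset A B -> countable_set B -> countable_set A.
Proof. intros AB [e He]. exists e. intros f Af. exact (He f (AB f Af)). Qed.

Lemma countable_union (A B : fset T) :
  countable_set A -> countable_set B -> countable_set (fun f => A f \/ B f).
Proof.
  intros [eA HA] [eB HB].
  exists (fun n => if fst (of_nat n) =? 0 then eA (snd (of_nat n)) else eB (snd (of_nat n))).
  intros f [Af|Bf].
  - destruct (HA f Af) as [k Hk]. exists (to_nat (0, k)). now rewrite cancel_of_to.
  - destruct (HB f Bf) as [k Hk]. exists (to_nat (1, k)). now rewrite cancel_of_to.
Qed.

Lemma countable_list (U : list (T -> T)) : countable_set (fun f => In f U).
Proof.
  exists (fun n => nth n U (fun x => x)). intros f Uf.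
  destruct (In_nth U f (fun x => x) Uf) as [n [_ Hn]]. now exists n.
Qed.

(** A finitary permutation is coded by a bound [B] and the table of its values below [B]. *)
Lemma countable_finitary : countably_infinite T -> countable_set (@finitary T).
Proof.
  intros (e & d & de & ed).
  exists (fun n x => d (if e x <? fst (of_nat n) then nth (e x) (list_of_nat (snd (of_nat n))) 0
                        else e x)).
  intros f [_ [l Hl]].
  set (B := S (list_max (map e l))).
  destruct (list_of_nat_surj (map (fun y => e (f (d y))) (seq 0 B))) as [c Hc].
  exists (to_nat (B, c)). apply functional_extensionality; intros x.
  rewrite cancel_of_to; simpl. rewrite Hc.
  destruct (Nat.ltb_spec (e x) B) as [Lt|Ge].
  - rewrite nth_indep with (d' := e (f (d 0))) by now rewrite length_map, length_seq.
    rewrite (map_nth (fun y => e (f (d y))) (seq 0 B) 0), seq_nth by exact Lt.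
    simpl. now rewrite !de.
  - destruct (classic (f x = x)) as [E|E]; [now rewrite E, de|].
    apply Hl, (in_map e), in_le_list_max in E. unfold B in Ge. lia.
Qed.

Section Words.
Variable e : nat -> (T -> T).
Hypothesis e_perm : forall k, is_perm (e k).

Definition perm_inv (f : T -> T) : T -> T :=
  epsilon (inhabits (fun x => x)) (fun fi => inv_pair f fi).

Lemma perm_inv_pair f : is_perm f -> inv_pair f (perm_inv f).
Proof. intros Hf. unfold perm_inv. apply epsilon_spec, Hf. Qed.

Definition letter (n : nat) : T -> T :=
  if fst (of_nat n) =? 0 then e (snd (of_nat n)) else perm_inv (e (snd (of_nat n))).

Definition letter_inv (n : nat) : nat :=
  to_nat (if fst (of_nat n) =? 0 then 1 else 0, snd (of_nat n)).

Lemma letter_inv_pair n : inv_pair (letter n) (letter (letter_inv n)).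
Proof.
  pose proof (perm_inv_pair _ (e_perm (snd (of_nat n)))) as Hp.
  unfold letter, letter_inv. rewrite cancel_of_to; simpl.
  destruct (fst (of_nat n) =? 0); simpl; [exact Hp|exact (inv_pair_sym _ _ Hp)].
Qed.

Fixpoint word (w : list nat) : T -> T :=
  match w with
  | [] => fun x => x
  | n :: w => fun x => letter n (word w x)
  end.

Lemma word_app w1 w2 x : word (w1 ++ w2) x = word w1 (word w2 x).
Proof. induction w1 as [|n w1 IH]; simpl; congruence. Qed.

Lemma word_inv_pair w : inv_pair (word w) (word (rev (map letter_inv w))).
Proof.
  induction w as [|n w IH]; [exact inv_pair_id|]. simpl.
  assert (E : word (rev (map letter_inv w) ++ [letter_inv n])
              = fun x => word (rev (map letter_inv w)) (letter (letter_inv n) x))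
    by (apply functional_extensionality; intros x; apply word_app).
  rewrite E. exact (inv_pair_comp _ _ _ _ (letter_inv_pair n) IH).
Qed.

Definition words : fset T := fun f => exists w, f = word w.

Lemma words_subgroup : subgroup words.
Proof.
  split; [|split; [|split]].
  - intros f [w ->]. eexists; apply word_inv_pair.
  - now exists [].
  - intros f h [w1 ->] [w2 ->]. exists (w1 ++ w2).
    apply functional_extensionality; intros x. symmetry; apply word_app.
  - intros f fi [w ->] f1 f2. exists (rev (map letter_inv w)).
    apply functional_extensionality; intros x.
    rewrite <- (proj2 (word_inv_pair w) x) at 1. apply f1.
Qed.

Lemma countable_words : countable_set words.
Proof.
  exists (fun n => word (list_of_nat n)). intros f [w ->].
  destruct (list_of_nat_surj w) as [n Hn]. exists n. now rewrite Hn.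
Qed.

End Words.

Lemma countable_gen (A : fset T) :
  (forall f, A f -> is_perm f) -> countable_set A -> countable_set (gen A).
Proof.
  intros HA [e He].
  set (e' := fun k => if excluded_middle_informative (is_perm (e k)) then e k else fun x => x).
  assert (e'_perm : forall k, is_perm (e' k)).
  { intros k. unfold e'. destruct (excluded_middle_informative _) as [P|_]; [exact P|].
    exists (fun x => x); exact inv_pair_id. }
  apply (countable_subset _ (words e')); [|apply countable_words].
  intros f Hf. apply Hf; [exact (words_subgroup e' e'_perm)|].
  intros h Ah. destruct (He h Ah) as [k <-]. exists [to_nat (0, k)].
  unfold word, letter. rewrite cancel_of_to; simpl. unfold e'.
  now destruct (excluded_middle_informative _) as [_|N]; [|destruct (N (HA _ Ah))].
Qed.

Lemma countable_of_preceq_finitary (G H : fset T) : countably_infinite T ->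
  subset H (@finitary T) -> preceq G H -> countable_set G.
Proof.
  intros hT HF [U [HU HG]].
  apply (countable_subset _ _ HG), (countable_subset _ (gen (fun h => finitary h \/ In h U))).
  - apply gen_mono. intros h [Hh|Uh]; [left; exact (HF h Hh)|now right].
  - apply countable_gen.
    + intros h [[Ph _]|Uh]; [exact Ph|exact (HU h Uh)].
    + apply countable_union; [exact (countable_finitary hT)|apply countable_list].
Qed.

End Countability.

Theorem lemma12p2 (T : Type) (hT : countably_infinite T) (G : fset T) :
  subgroup G ->
  ~ subset G (@finitary T) ->
  (forall H : fset T, subgroup H -> (preceq_cj H G <-> preceq H G)) /\
  (~ countable_set G ->
   forall H : fset T, subgroup H -> (approx_cj H G <-> approx H G)).
Proof.
  intros HG NFG. split.
  - intros H HH. split; [apply preceq_cj_preceq|apply preceq_preceq_cj]; assumption.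
  - intros Hunc H HH. split; intros [HleG GleH]; split.
    + exact (preceq_cj_preceq _ _ _ HG HleG).
    + exact (preceq_cj_preceq _ _ _ HH GleH).
    + exact (preceq_preceq_cj _ _ _ hT HG NFG HleG).
    + apply (preceq_preceq_cj _ _ _ hT HH); [|exact GleH].
      intros HF. exact (Hunc (countable_of_preceq_finitary _ _ _ hT HF GleH)).
Qed.
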